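(* Consider the HYZ12 protocol with $k$ sites and accuracy parameter $\varepsilon$ with $\varepsilon\sqrt{k}<1$, run on the event stream generated by the round-robin adversary (both described in the context). Fix the transcript (all states of the adversary, sites and server) up to the initiation of a round at event count $n_0\ge 4\sqrt{k}/\varepsilon$, and consider the execution from event $n_0+1$ onward. Let $R$ be the number of distinct sites that send a Report message to the server during the next $n_0$ events. Then \[ \Pr\!\left[R>\tfrac{k}{8}\right]\;\ge\;1-\exp\!\left(-\tfrac{\sqrt{k}}{32\varepsilon}\right). \]
   Context: Distributed counting: a server and $k$ sites; events arrive one at a time, each at some site; $n_i$ is the number of events at site $i$ so far and $n=\sum_in_i$ is the event count. ${\rm Geom}(q)$ is the geometric distribution on $\{1,2,\dots\}$. Doubling subprotocol: each site, after incrementing $n_i$, sends $(i,n_i)$ to the server whenever $n_i$ is a power of $2$. The server keeps $n'_i$ (initially $0$), $n'=\sum_in'_i$, threshold $\tau=1$; upon receiving $(i,n_i)$ it sets $n'\gets n'+n_i-n'_i$, $n'_i\gets n_i$, and if $n'\ge2\tau$ triggers BoundaryReached$(n')$ and sets $\tau\gets n'$. HYZ12 protocol: each site keeps a transmission probability $p$ (initially $1$, updated by server broadcasts) and $n_i$; on each event at site $i$, $n_i\gets n_i+1$ and independently with probability $p$ the site sends Report$(i,n_i)$. The server keeps $\bar n_i=\hat n_i=0$ for each $i$ and $p=1$. On Report$(i,\bar n)$: $\bar n_i\gets\bar n$, $\hat n_i\gets\bar n_i-1+1/p$, publish $\hat n=\sum_j\hat n_j$. On BoundaryReached$(n')$ (reports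 processed first): a new round starts; $p_{\rm old}\gets p$, $p\gets2^{\min\{0,\lfloor\log_2(\sqrt k/(\varepsilon n'))\rfloor\}}$; if $p<1$, for each $i$ sample independently $Z_i=B\cdot G$, $B\sim{\rm Bernoulli}(1-p/p_{\rm old})$, $G\sim{\rm Geom}(p)$, set $\bar n_i\gets\max\{0,\bar n_i-Z_i\}$, $\hat n_i\gets0$ if $\bar n_i=0$ else $\bar n_i-1+1/p$, and broadcast $p$. Round-robin adversary: start with current site $i=1$ and record the current published estimate $\hat n_{\rm last}$. Repeatedly inject events at the current site $i$ until the published estimate differs from $\hat n_{\rm last}$; then set $\hat n_{\rm last}$ to the new estimate and move to site $1+(i\bmod k)$. *)

From Stdlib Require Import Reals List Arith PeanoNat ZArith ClassicalEpsilon.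
From Coquelicot Require Import Coquelicot.
Open Scope R_scope.

(* Discrete probabilistic programs (finite depth, countable branching) *)

Inductive dist (A : Type) : Type :=
  | Ret : A -> dist A
  | Flip : R -> (bool -> dist A) -> dist A      (* Bernoulli(q): true w.p. q *)
  | GeomS : R -> (nat -> dist A) -> dist A.     (* Geom(q) on {1,2,...} *)
Arguments Ret {A} _.
Arguments Flip {A} _ _.
Arguments GeomS {A} _ _.

Fixpoint bind {A B : Type} (d : dist A) (f : A -> dist B) : dist B :=
  match d with
  | Ret a => f a
  | Flip q k => Flip q (fun b => bind (k b) f)
  | GeomS q k => GeomS q (fun g => bind (k g) f)
  end.

Fixpoint Expect {A : Type} (d : dist A) (f : A -> R) : R :=
  match d with
  | Ret a => f a
  | Flip q k => q * Expect (k true) f + (1 - q) * Expect (k false) f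
  | GeomS q k => Series (fun j => (1 - q) ^ j * q * Expect (k (S j)) f)
  end.

Definition Prob {A : Type} (d : dist A) (P : A -> Prop) : R :=
  Expect d (fun a => match excluded_middle_informative (P a) with
                     | left _ => 1 | right _ => 0 end).

Fixpoint in_support {A : Type} (d : dist A) (a : A) : Prop :=
  match d with
  | Ret b => a = b
  | Flip q k => (0 < q /\ in_support (k true) a) \/ (q < 1 /\ in_support (k false) a)
  | GeomS q k => exists j : nat, 0 < (1 - q) ^ j * q /\ in_support (k (S j)) a
  end.

(* Sites are numbered 1..k.                                            *)

Record state : Type := mkState {
  st_n     : nat -> nat;
  st_sitep : R;            (* transmission probability held by the sites *)
  (* server, HYZ12 part *)
  st_nbar  : nat -> nat;
  st_nhat  : nat -> R;
  st_p     : R;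
  st_pub   : R;            (* currently published estimate \hat n *)
  (* server, doubling part *)
  st_dn    : nat -> nat;
  st_dsum  : nat;
  st_tau   : nat;
  (* adversary *)
  st_cur   : nat;
  st_last  : R
}.

Definition upd {T : Type} (f : nat -> T) (i : nat) (v : T) : nat -> T :=
  fun j => if Nat.eqb j i then v else f j.

Fixpoint sumR (f : nat -> R) (m : nat) : R :=
  match m with
  | O => 0
  | S m' => sumR f m' + f m
  end.

Definition is_pow2 (m : nat) : bool := Nat.eqb (2 ^ Nat.log2 m) m.

Definition floor_log2 (x : R) : Z := Int_part (ln x / ln 2).

Definition new_p (k : nat) (eps : R) (n' : nat) : R :=
  powerRZ 2 (Z.min 0 (floor_log2 (sqrt (INR k) / (eps * INR n')))).

Definition init_state : state :=
  {| st_n := fun _ => 0%nat; st_sitep := 1;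
     st_nbar := fun _ => 0%nat; st_nhat := fun _ => 0; st_p := 1; st_pub := 0;
     st_dn := fun _ => 0%nat; st_dsum := 0%nat; st_tau := 1%nat;
     st_cur := 1%nat; st_last := 0 |}.

Definition set_nbar_nhat (s : state) (i : nat) (nb : nat) (nh : R) : state :=
  {| st_n := st_n s; st_sitep := st_sitep s;
     st_nbar := upd (st_nbar s) i nb; st_nhat := upd (st_nhat s) i nh;
     st_p := st_p s; st_pub := st_pub s;
     st_dn := st_dn s; st_dsum := st_dsum s; st_tau := st_tau s;
     st_cur := st_cur s; st_last := st_last s |}.

(* Resampling of \bar n_i at the start of a new round, for the sites in l:
   Z_i = B * G with B ~ Bernoulli(1 - p/p_old), G ~ Geom(p), independent. *)
Fixpoint resample (l : list nat) (p pold : R) (s : state) : dist state :=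
  match l with
  | nil => Ret s
  | i :: l' =>
      Flip (1 - p / pold) (fun b =>
        if b then
          GeomS p (fun g =>
            let nb := (st_nbar s i - g)%nat in
            let nh := if Nat.eqb nb 0 then 0 else INR nb - 1 + 1 / p in
            resample l' p pold (set_nbar_nhat s i nb nh))
        else
          let nb := st_nbar s i in
          let nh := if Nat.eqb nb 0 then 0 else INR nb - 1 + 1 / p in
          resample l' p pold (set_nbar_nhat s i nb nh))
  end.

Definition boundary (k : nat) (eps : R) (s : state) : dist state :=
  let n' := st_dsum s in
  let pold := st_p s in
  let p := new_p k eps n' in
  let s1 := {| st_n := st_n s; st_sitep := st_sitep s;
               st_nbar := st_nbar s; st_nhat := st_nhat s;
               st_p := p; st_pub := st_pub s;
               st_dn := st_dn s; st_dsum := st_dsum s; st_tau := n';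
               st_cur := st_cur s; st_last := st_last s |} in
  match Rlt_dec p 1 with
  | left _ =>
      bind (resample (seq 1 k) p pold s1) (fun s2 =>
        (* broadcast p to all sites *)
        Ret {| st_n := st_n s2; st_sitep := p;
               st_nbar := st_nbar s2; st_nhat := st_nhat s2;
               st_p := st_p s2; st_pub := st_pub s2;
               st_dn := st_dn s2; st_dsum := st_dsum s2; st_tau := st_tau s2;
               st_cur := st_cur s2; st_last := st_last s2 |})
  | right _ => Ret s1
  end.

(* One event injected by the adversary at its current site.
   Output: new state, [Some i] iff site i sent a Report during this event,
   and whether BoundaryReached was triggered during this event. *)
Definition step (k : nat) (eps : R) (s : state) : dist (state * option nat * bool) :=
  let i := st_cur s in
  let ni := S (st_n s i) in
  let s0 := {| st_n := upd (st_n s) i ni; st_sitep := st_sitep s;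
               st_nbar := st_nbar s; st_nhat := st_nhat s;
               st_p := st_p s; st_pub := st_pub s;
               st_dn := st_dn s; st_dsum := st_dsum s; st_tau := st_tau s;
               st_cur := st_cur s; st_last := st_last s |} in
  Flip (st_sitep s) (fun c =>
    (* HYZ12 report, processed first *)
    let s1 :=
      if c then
        let nbar' := upd (st_nbar s0) i ni in
        let nhat' := upd (st_nhat s0) i (INR ni - 1 + 1 / st_p s0) in
        {| st_n := st_n s0; st_sitep := st_sitep s0;
           st_nbar := nbar'; st_nhat := nhat';
           st_p := st_p s0; st_pub := sumR nhat' k;
           st_dn := st_dn s0; st_dsum := st_dsum s0; st_tau := st_tau s0;
           st_cur := st_cur s0; st_last := st_last s0 |}
      else s0 in
    let rep := if c then Some i else None in
    let after_doubling : dist (state * bool) :=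
      if is_pow2 ni then
        let dsum' := (st_dsum s1 + ni - st_dn s1 i)%nat in
        let s2 := {| st_n := st_n s1; st_sitep := st_sitep s1;
                     st_nbar := st_nbar s1; st_nhat := st_nhat s1;
                     st_p := st_p s1; st_pub := st_pub s1;
                     st_dn := upd (st_dn s1) i ni; st_dsum := dsum';
                     st_tau := st_tau s1;
                     st_cur := st_cur s1; st_last := st_last s1 |} in
        if Nat.leb (2 * st_tau s2) dsum'
        then bind (boundary k eps s2) (fun s3 => Ret (s3, true))
        else Ret (s2, false)
      else Ret (s1, false) in
    bind after_doubling (fun '(s3, bd) =>
      (* round-robin adversary observes the published estimate *)
      let s4 :=
        match Req_EM_T (st_pub s3) (st_last s3) with
        | left _ => s3
        | right _ =>
            {| st_n := st_n s3; st_sitep := st_sitep s3;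
               st_nbar := st_nbar s3; st_nhat := st_nhat s3;
               st_p := st_p s3; st_pub := st_pub s3;
               st_dn := st_dn s3; st_dsum := st_dsum s3; st_tau := st_tau s3;
               st_cur := S (Nat.modulo (st_cur s3) k); st_last := st_pub s3 |}
        end in
      Ret (s4, rep, bd))).

(* Execution of the first m events from the initial state; the boolean
   records whether the m-th event triggered BoundaryReached (a new round). *)
Fixpoint prefix (k : nat) (eps : R) (m : nat) : dist (state * bool) :=
  match m with
  | O => Ret (init_state, false)
  | S m' => bind (prefix k eps m') (fun '(s, _) =>
              bind (step k eps s) (fun '(s', _, bd) => Ret (s', bd)))
  end.

(* Execution of the next m events from state s; returns the list of sites
   that sent a Report (one entry per report, in order). *)
Fixpoint window (k : nat) (eps : R) (m : nat) (s : state) : dist (list nat) :=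
  match m with
  | O => Ret nil
  | S m' => bind (step k eps s) (fun '(s', rep, _) =>
              bind (window k eps m' s') (fun l =>
                Ret (match rep with Some i => i :: l | None => l end)))
  end.

Definition distinct_count (l : list nat) : nat := length (nodup Nat.eq_dec l).

(* Let [c = sqrt k / (2 eps)]. From the boundary at [n0] on, the transmission probability is
   [new_p tau >= c / tau >= c / n], where [n] is the current event count, and the window holds
   at most one further boundary. The adversary moves to the next site whenever a report changes
   the published estimate; a report fails to do so ("stalls") at most twice in the window. So,
   up to two stalls, the number of distinct reporting sites dominates the number of successes
   of independent trials with probabilities [c / n], [n0 <= n < 2 n0], and a Chernoff-type
   supermartingale ([fail_bound]) bounds the probability of fewer than [k / 8 + 1] successes by
   [exp (- c / 16)], using [sum_(n0 <= n < 2 n0) 1 / n >= 2 / 3] and [k / 2 < c]. *)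

From Stdlib Require Import Reals List Lra Lia ClassicalEpsilon.
From Coquelicot Require Import Coquelicot.
Open Scope R_scope.

Fixpoint dist_wf {A : Type} (d : dist A) : Prop :=
  match d with
  | Ret _ => True
  | Flip q k => 0 <= q <= 1 /\ (0 < q -> dist_wf (k true)) /\ (q < 1 -> dist_wf (k false))
  | GeomS q k => 0 < q <= 1 /\ (forall j, 0 < (1 - q) ^ j * q -> dist_wf (k (S j)))
  end.

Lemma in_support_bind {A B : Type} (d : dist A) (f : A -> dist B) b :
  in_support (bind d f) b -> exists a, in_support d a /\ in_support (f a) b.
Proof.
  induction d as [a|q k IH|q k IH]; simpl; intros H.
  - exists a; auto.
  - destruct H as [[Hq H]|[Hq H]].
    + destruct (IH true H) as [a [H1 H2]]; exists a; auto.
    + destruct (IH false H) as [a [H1 H2]]; exists a; auto.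
  - destruct H as [j [Hj H]].
    destruct (IH (S j) H) as [a [H1 H2]]; exists a; split; [exists j|]; auto.
Qed.

Lemma dist_wf_bind {A B : Type} (d : dist A) (f : A -> dist B) :
  dist_wf d -> (forall a, in_support d a -> dist_wf (f a)) -> dist_wf (bind d f).
Proof.
  induction d as [a|q k IH|q k IH]; simpl; intros Hw Hf.
  - apply Hf; auto.
  - destruct Hw as [Hq [H1 H2]]; repeat split; try lra; intro; apply IH; auto.
  - destruct Hw as [Hq H1]; split; auto.
    intros j Hj; apply IH; auto. intros a Ha; apply Hf; exists j; auto.
Qed.

Lemma Expect_bind {A B : Type} (d : dist A) (f : A -> dist B) g :
  Expect (bind d f) g = Expect d (fun a => Expect (f a) g).
Proof.
  induction d as [a|q k IH|q k IH]; simpl.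
  - reflexivity.
  - rewrite !IH; reflexivity.
  - apply Series_ext; intro n; rewrite IH; reflexivity.
Qed.

Lemma Expect_ext {A : Type} (d : dist A) f g :
  (forall a, f a = g a) -> Expect d f = Expect d g.
Proof.
  intros H; induction d as [a|q k IH|q k IH]; simpl.
  - auto.
  - rewrite !IH; reflexivity.
  - apply Series_ext; intro n; rewrite IH; reflexivity.
Qed.

Lemma is_series_geom_weights (q : R) : 0 < q <= 1 -> is_series (fun j => (1 - q) ^ j * q) 1.
Proof.
  intros Hq.
  assert (H := is_series_scal_r q _ _ (is_series_geom (1 - q) ltac:(rewrite Rabs_right; lra))).
  replace (/ (1 - (1 - q)) * q) with 1 in H by (field; lra). exact H.
Qed.

Lemma convex_comb_bounds q x y lo hi : 0 <= q <= 1 ->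
  (0 < q -> lo <= x <= hi) -> (q < 1 -> lo <= y <= hi) -> lo <= q * x + (1 - q) * y <= hi.
Proof.
  intros Hq Hx Hy.
  destruct (Req_dec q 0) as [->|H0]; [specialize (Hy ltac:(lra)); lra|].
  destruct (Req_dec q 1) as [->|H1]; [specialize (Hx ltac:(lra)); lra|].
  specialize (Hx ltac:(lra)); specialize (Hy ltac:(lra)); nra.
Qed.

Lemma convex_comb_le q a b x y : 0 <= q <= 1 -> a <= x -> b <= y ->
  q * a + (1 - q) * b <= q * x + (1 - q) * y.
Proof. intros Hq Ha Hb. nra. Qed.

Lemma Series_weighted_bounds (w x : nat -> R) lo hi : 0 <= lo ->
  is_series w 1 -> (forall j, 0 <= w j) -> (forall j, 0 < w j -> lo <= x j <= hi) ->
  lo <= Series (fun j => w j * x j) <= hi.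
Proof.
  intros Hlo Hw Hw0 Hx.
  assert (Hb : forall j, lo * w j <= w j * x j <= hi * w j).
  { intro j. destruct (Rle_lt_or_eq_dec 0 (w j) (Hw0 j)) as [Hp|Hz].
    - specialize (Hx j Hp); nra.
    - rewrite <- Hz; lra. }
  assert (Hscal : forall a, is_series (fun j => a * w j) a).
  { intro a. assert (H := is_series_scal_l a w 1 Hw). rewrite Rmult_1_r in H; exact H. }
  assert (Hex : ex_series (fun j => w j * x j)).
  { apply (@ex_series_le R_AbsRing R_CompleteNormedModule _ (fun j => hi * w j));
      [|eexists; apply Hscal].
    intro n; specialize (Hb n); specialize (Hw0 n).
    change (Rabs (w n * x n) <= hi * w n). rewrite Rabs_right; nra. }
  split.
  - rewrite <- (is_series_unique _ _ (Hscal lo)). apply Series_le; auto.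
    intro n; specialize (Hb n); specialize (Hw0 n). split; [nra|lra].
  - rewrite <- (is_series_unique _ _ (Hscal hi)). apply Series_le; [|eexists; apply Hscal].
    intro n; specialize (Hb n); specialize (Hw0 n). split; [nra|lra].
Qed.

Lemma Expect_bounds {A : Type} (d : dist A) (F : A -> R) lo hi :
  0 <= lo -> dist_wf d -> (forall a, in_support d a -> lo <= F a <= hi) ->
  lo <= Expect d F <= hi.
Proof.
  intros Hlo; induction d as [a|q k IH|q k IH]; simpl; intros Hw HF.
  - apply HF; reflexivity.
  - destruct Hw as [Hq [H1 H2]].
    apply convex_comb_bounds; [exact Hq| |]; intro Hp; apply IH; auto.
  - destruct Hw as [Hq Hk]. apply Series_weighted_bounds; auto.
    + apply is_series_geom_weights; auto.
    + intro j; apply Rmult_le_pos; [apply pow_le|]; lra.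
    + intros j Hj. apply IH; auto. intros a Ha; apply HF; exists j; auto.
Qed.

Lemma Expect_lower_bound {A : Type} (d : dist A) (F : A -> R) c hi :
  dist_wf d -> (forall a, in_support d a -> 0 <= F a <= hi) ->
  (forall a, in_support d a -> c <= F a) -> c <= Expect d F.
Proof.
  intros Hw H1 H2.
  destruct (Rle_or_lt c 0) as [Hc|Hc].
  - enough (0 <= Expect d F <= hi) by lra. apply Expect_bounds; auto; lra.
  - enough (c <= Expect d F <= hi) by lra.
    apply Expect_bounds; auto; [lra|]. intros a Ha; split; [apply H2|apply H1]; auto.
Qed.

Lemma exp_le_compat x y : x <= y -> exp x <= exp y.
Proof. intros [H|H]; [left; apply exp_increasing; exact H|subst; lra]. Qed.

Lemma Int_part_le_compat a b : a <= b -> (Int_part a <= Int_part b)%Z.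
Proof.
  intros H. destruct (base_Int_part a) as [A1 A2]. destruct (base_Int_part b) as [B1 B2].
  assert (Hlt : IZR (Int_part a) < IZR (Int_part b + 1)) by (rewrite plus_IZR; lra).
  apply lt_IZR in Hlt. lia.
Qed.

Lemma ln_2_pos : 0 < ln 2.
Proof. pose proof ln_lt_2; lra. Qed.

Lemma new_p_exp k eps n :
  new_p k eps n = exp (IZR (Z.min 0 (floor_log2 (sqrt (INR k) / (eps * INR n)))) * ln 2).
Proof. unfold new_p. rewrite powerRZ_Rpower by lra. reflexivity. Qed.

Lemma new_p_range k eps n : 0 < new_p k eps n <= 1.
Proof.
  rewrite new_p_exp. split; [apply exp_pos|].
  rewrite <- exp_0. apply exp_le_compat.
  assert (IZR (Z.min 0 (floor_log2 (sqrt (INR k) / (eps * INR n)))) <= 0) by (apply IZR_le; lia).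
  pose proof ln_2_pos; nra.
Qed.

Lemma new_p_antitone k eps a b : (1 <= k)%nat -> 0 < eps -> (0 < a <= b)%nat ->
  new_p k eps b <= new_p k eps a.
Proof.
  intros Hk He Hab. rewrite !new_p_exp. apply exp_le_compat.
  apply Rmult_le_compat_r; [left; apply ln_2_pos|]. apply IZR_le.
  assert (Hs : 0 < sqrt (INR k)) by (apply sqrt_lt_R0, lt_0_INR; lia).
  assert (Ha : 0 < INR a) by (apply lt_0_INR; lia).
  assert (Hb : INR a <= INR b) by (apply le_INR; lia).
  assert (Hq : sqrt (INR k) / (eps * INR b) <= sqrt (INR k) / (eps * INR a)).
  { unfold Rdiv. apply Rmult_le_compat_l; [lra|]. apply Rinv_le_contravar; nra. }
  enough (floor_log2 (sqrt (INR k) / (eps * INR b)) <= floor_log2 (sqrt (INR k) / (eps * INR a)))%Z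
    by lia.
  apply Int_part_le_compat. unfold Rdiv at 1 3.
  apply Rmult_le_compat_r; [left; apply Rinv_0_lt_compat, ln_2_pos|].
  apply ln_le; auto. apply Rdiv_lt_0_compat; nra.
Qed.

(* Rounding the exponent down loses at most a factor 2. *)
Lemma new_p_ge k eps n : (1 <= k)%nat -> 0 < eps -> (0 < n)%nat ->
  Rmin 1 (sqrt (INR k) / (2 * eps * INR n)) <= new_p k eps n.
Proof.
  intros Hk He Hn. rewrite new_p_exp. unfold floor_log2.
  set (x := sqrt (INR k) / (eps * INR n)).
  assert (Hs : 0 < sqrt (INR k)) by (apply sqrt_lt_R0, lt_0_INR; lia).
  assert (Hnr : 0 < INR n) by (apply lt_0_INR; lia).
  assert (Hx : 0 < x) by (apply Rdiv_lt_0_compat; nra).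
  set (z := Int_part (ln x / ln 2)).
  destruct (Z.le_gt_cases 0 z) as [Hz|Hz].
  - rewrite Z.min_l by lia. rewrite Rmult_0_l, exp_0. apply Rmin_l.
  - rewrite Z.min_r by lia. eapply Rle_trans; [apply Rmin_r|].
    destruct (base_Int_part (ln x / ln 2)) as [_ B]. fold z in B.
    pose proof ln_2_pos.
    assert (Hzl : ln x - ln 2 < IZR z * ln 2).
    { replace (ln x - ln 2) with ((ln x / ln 2 - 1) * ln 2) by (field; lra).
      apply Rmult_lt_compat_r; lra. }
    replace (sqrt (INR k) / (2 * eps * INR n)) with (exp (ln x - ln 2)).
    + left; apply exp_increasing; lra.
    + unfold Rminus. rewrite exp_plus, exp_Ropp, !exp_ln by lra. unfold x. field; lra.
Qed.

Fixpoint sumN (f : nat -> nat) (m : nat) : nat :=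
  match m with O => O | S m' => (sumN f m' + f m)%nat end.

Lemma sumN_0 m : sumN (fun _ => 0%nat) m = 0%nat.
Proof. induction m as [|m IH]; simpl; lia. Qed.

Lemma sumN_eq f g m : (forall j, (1 <= j <= m)%nat -> f j = g j) -> sumN f m = sumN g m.
Proof.
  induction m as [|m IH]; intros H; simpl; auto.
  rewrite IH by (intros; apply H; lia). rewrite (H (S m)) by lia. reflexivity.
Qed.

Lemma sumR_eq f g m : (forall j, (1 <= j <= m)%nat -> f j = g j) -> sumR f m = sumR g m.
Proof.
  induction m as [|m IH]; intros H; simpl; auto.
  rewrite IH by (intros; apply H; lia). rewrite (H (S m)) by lia. reflexivity.
Qed.

Lemma upd_same {T : Type} (f : nat -> T) i v : upd f i v i = v.
Proof. unfold upd. rewrite Nat.eqb_refl. reflexivity. Qed.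

Lemma upd_other {T : Type} (f : nat -> T) i j v : j <> i -> upd f i v j = f j.
Proof. intros H. unfold upd. destruct (Nat.eqb_spec j i); [contradiction|reflexivity]. Qed.

Lemma sumN_upd f i v m : (1 <= i <= m)%nat -> (sumN (upd f i v) m + f i = sumN f m + v)%nat.
Proof.
  induction m as [|m IH]; intros Hi; [lia|]. simpl.
  destruct (Nat.eq_dec i (S m)) as [->|Hne].
  - rewrite upd_same, (sumN_eq (upd f (S m) v) f) by (intros; apply upd_other; lia). lia.
  - rewrite upd_other by lia. specialize (IH ltac:(lia)). lia.
Qed.

Lemma sumR_upd f i v m : (1 <= i <= m)%nat -> sumR (upd f i v) m = sumR f m - f i + v.
Proof.
  induction m as [|m IH]; intros Hi; [lia|]. simpl.
  destruct (Nat.eq_dec i (S m)) as [->|Hne].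
  - rewrite upd_same, (sumR_eq (upd f (S m) v) f) by (intros; apply upd_other; lia). ring.
  - rewrite upd_other, IH by lia. ring.
Qed.

Lemma sumN_le f g m : (forall j, (1 <= j <= m)%nat -> (f j <= g j)%nat) ->
  (sumN f m <= sumN g m)%nat.
Proof.
  induction m as [|m IH]; intros H; simpl; auto.
  specialize (H (S m) ltac:(lia)) as Hm. specialize (IH ltac:(intros; apply H; lia)). lia.
Qed.

Lemma sumN_lt_double f g m :
  (forall j, (1 <= j <= m)%nat -> (f j <= 2 * g j)%nat /\ ((0 < f j)%nat -> (f j < 2 * g j)%nat)) ->
  (0 < sumN f m)%nat -> (sumN f m < 2 * sumN g m)%nat.
Proof.
  induction m as [|m IH]; intros H Hp; cbn [sumN] in *; [lia|].
  destruct (H (S m) ltac:(lia)) as [H1 H2].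
  assert (Hle : (sumN f m <= sumN (fun j => 2 * g j)%nat m)%nat)
    by (apply sumN_le; intros j Hj; apply H; lia).
  assert (Hdbl : sumN (fun j => 2 * g j)%nat m = (2 * sumN g m)%nat)
    by (clear; induction m as [|m IH]; cbn [sumN]; lia).
  destruct (Nat.eq_dec (f (S m)) 0).
  - specialize (IH ltac:(intros; apply H; lia) ltac:(lia)). lia.
  - specialize (H2 ltac:(lia)). lia.
Qed.

Definition next_site (k c : nat) : nat := S (Nat.modulo c k).

Lemma next_site_range k c : (1 <= k)%nat -> (1 <= next_site k c <= k)%nat.
Proof.
  intros Hk. unfold next_site. pose proof (Nat.mod_upper_bound c k ltac:(lia)). lia.
Qed.

Lemma iter_next_site k c j : (1 <= c <= k)%nat ->
  Nat.iter j (next_site k) c = S (Nat.modulo (c - 1 + j) k).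
Proof.
  intros Hc. induction j as [|j IH].
  - simpl. rewrite Nat.add_0_r, Nat.mod_small by lia. lia.
  - simpl. rewrite IH. unfold next_site. f_equal.
    replace (c - 1 + S j)%nat with ((c - 1 + j) + 1)%nat by lia.
    rewrite (Nat.Div0.add_mod (c - 1 + j) 1 k).
    destruct (Nat.eq_dec k 1) as [->|Hk1].
    + rewrite !Nat.mod_1_r. reflexivity.
    + rewrite (Nat.mod_small 1 k) by lia. f_equal. lia.
Qed.

Lemma iter_next_site_neq k c j : (1 <= c <= k)%nat -> (1 <= j < k)%nat ->
  Nat.iter j (next_site k) c <> c.
Proof.
  intros Hc Hj. rewrite iter_next_site by auto. intros E.
  assert (Hd := Nat.div_mod (c - 1 + j) k ltac:(lia)).
  replace (Nat.modulo (c - 1 + j) k) with (c - 1)%nat in Hd by lia.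
  assert (Hq : (Nat.div (c - 1 + j) k < 2)%nat) by (apply Nat.Div0.div_lt_upper_bound; lia).
  destruct (Nat.div (c - 1 + j) k) as [|[|q]]; lia.
Qed.

Lemma is_pow2_pow e : is_pow2 (2 ^ e) = true.
Proof. unfold is_pow2. rewrite Nat.log2_pow2 by lia. apply Nat.eqb_refl. Qed.

Lemma is_pow2_spec n : is_pow2 n = true -> n = (2 ^ Nat.log2 n)%nat.
Proof. unfold is_pow2. intros H. symmetry. apply Nat.eqb_eq, H. Qed.

(* [dn] is the last power of two reached by the count [n], i.e. the value [n'_i] that the
   doubling subprotocol holds for a site with [n_i = n]. *)
Definition doubling_counter (n dn : nat) : Prop :=
  (dn <= n)%nat /\ ((0 < n)%nat -> (exists e, dn = 2 ^ e)%nat /\ (n < 2 * dn)%nat).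

Lemma doubling_counter_0 : doubling_counter 0 0.
Proof. split; [lia|intros; lia]. Qed.

Lemma doubling_counter_step n dn : doubling_counter n dn ->
  doubling_counter (S n) (if is_pow2 (S n) then S n else dn).
Proof.
  intros [H1 H2]. destruct (is_pow2 (S n)) eqn:E.
  - split; [lia|]. split; [exists (Nat.log2 (S n)); apply is_pow2_spec; auto|lia].
  - destruct (Nat.eq_dec n 0) as [->|Hn].
    + change (is_pow2 (2 ^ 0) = false) in E. rewrite is_pow2_pow in E. discriminate.
    + destruct (H2 ltac:(lia)) as [[e He] Hlt]. split; [lia|]. split; [exists e; auto|].
      destruct (Nat.eq_dec (S n) (2 * dn)) as [Eq|]; [|lia].
      rewrite Eq, He in E. replace (2 * 2 ^ e)%nat with (2 ^ S e)%nat in E by (simpl; lia).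
      rewrite is_pow2_pow in E; discriminate.
Qed.

Definition estimate_of (p : R) (nb : nat) : R := if Nat.eqb nb 0 then 0 else INR nb - 1 + 1 / p.

Record server_inv (k : nat) (eps : R) (s : state) : Prop := {
  inv_cur : (1 <= st_cur s <= k)%nat;
  inv_sitep : st_sitep s = st_p s;
  inv_p : 0 < st_p s <= 1;
  inv_tau : (1 <= st_tau s)%nat;
  inv_p_round : st_p s = 1 \/ st_p s = new_p k eps (st_tau s);
  inv_reports : forall j, (1 <= j <= k)%nat ->
    (st_nbar s j <= st_n s j)%nat /\ st_nhat s j = estimate_of (st_p s) (st_nbar s j);
  inv_doubling : forall j, (1 <= j <= k)%nat -> doubling_counter (st_n s j) (st_dn s j);
  inv_dsum : st_dsum s = sumN (st_dn s) k
}.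

Lemma new_p_le_p k eps s d : (1 <= k)%nat -> 0 < eps -> server_inv k eps s ->
  (st_tau s <= d)%nat -> new_p k eps d <= st_p s.
Proof.
  intros Hk He HI Hd. destruct (inv_p_round _ _ _ HI) as [E|E]; rewrite E.
  - apply new_p_range.
  - apply new_p_antitone; auto. pose proof (inv_tau _ _ _ HI); lia.
Qed.

Definition with_counts (s : state) (nb : nat -> nat) (nh : nat -> R) : state :=
  {| st_n := st_n s; st_sitep := st_sitep s; st_nbar := nb; st_nhat := nh;
     st_p := st_p s; st_pub := st_pub s; st_dn := st_dn s; st_dsum := st_dsum s;
     st_tau := st_tau s; st_cur := st_cur s; st_last := st_last s |}.

Lemma resample_spec l p pold s s' : in_support (resample l p pold s) s' ->
  s' = with_counts s (st_nbar s') (st_nhat s') /\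
  (forall j, (st_nbar s' j <= st_nbar s j)%nat) /\
  (forall j, In j l -> st_nhat s' j = estimate_of p (st_nbar s' j)) /\
  (forall j, ~ In j l -> st_nbar s' j = st_nbar s j /\ st_nhat s' j = st_nhat s j).
Proof.
  revert s. induction l as [|i l IH]; intros s H; simpl in H.
  - subst s'. split; [destruct s; reflexivity|]. repeat split; auto. intros j [].
  - enough (K : forall nb, (nb <= st_nbar s i)%nat ->
      in_support (resample l p pold (set_nbar_nhat s i nb (estimate_of p nb))) s' ->
      s' = with_counts s (st_nbar s') (st_nhat s') /\
      (forall j, (st_nbar s' j <= st_nbar s j)%nat) /\
      (forall j, In j (i :: l) -> st_nhat s' j = estimate_of p (st_nbar s' j)) /\
      (forall j, ~ In j (i :: l) -> st_nbar s' j = st_nbar s j /\ st_nhat s' j = st_nhat s j)).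
    { destruct H as [[_ [g [_ H]]]|[_ H]];
        [apply (K (st_nbar s i - S g)%nat)|apply (K (st_nbar s i))]; auto; lia. }
    intros nb Hnb Hs. destruct (IH _ Hs) as (E & Hle & Hin & Hout). simpl in Hle, Hout.
    split; [rewrite E at 1; reflexivity|]. split; [|split].
    + intro j. specialize (Hle j). destruct (Nat.eq_dec j i) as [->|Hji].
      * rewrite upd_same in Hle; lia.
      * rewrite upd_other in Hle; auto.
    + intros j [<-|Hj]; [|apply Hin; auto].
      destruct (in_dec Nat.eq_dec i l) as [Hil|Hil]; [apply Hin; auto|].
      destruct (Hout i Hil) as [-> ->]. rewrite !upd_same. reflexivity.
    + intros j Hj. destruct (Hout j (fun H => Hj (or_intror H))) as [-> ->].
      rewrite !upd_other by (intro; apply Hj; left; auto). auto.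
Qed.

Lemma boundary_spec k eps s s3 : in_support (boundary k eps s) s3 ->
  let p' := new_p k eps (st_dsum s) in
  s3 = {| st_n := st_n s; st_sitep := st_sitep s3; st_nbar := st_nbar s3; st_nhat := st_nhat s3;
          st_p := p'; st_pub := st_pub s; st_dn := st_dn s; st_dsum := st_dsum s;
          st_tau := st_dsum s; st_cur := st_cur s; st_last := st_last s |} /\
  (forall j, (st_nbar s3 j <= st_nbar s j)%nat) /\
  (p' < 1 -> st_sitep s3 = p' /\
     forall j, (1 <= j <= k)%nat -> st_nhat s3 j = estimate_of p' (st_nbar s3 j)) /\
  (~ p' < 1 -> st_sitep s3 = st_sitep s /\ st_nbar s3 = st_nbar s /\ st_nhat s3 = st_nhat s).
Proof.
  intros H p'. unfold boundary in H. fold p' in H.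
  destruct (Rlt_dec p' 1) as [Hlt|Hge].
  - apply in_support_bind in H. destruct H as [s4 [H1 H2]]. simpl in H2. subst s3.
    destruct (resample_spec _ _ _ _ _ H1) as (E & Hle & Hin & _).
    rewrite E; simpl. repeat split; auto; try tauto.
    intros j Hj. apply Hin, in_seq. lia.
  - simpl in H. subst s3. simpl. repeat split; auto; tauto.
Qed.

Lemma boundary_inv k eps s s3 : (1 <= k)%nat -> 0 < eps -> server_inv k eps s ->
  (st_tau s <= st_dsum s)%nat -> in_support (boundary k eps s) s3 -> server_inv k eps s3.
Proof.
  intros Hk He HI Htau Hs.
  destruct (boundary_spec _ _ _ _ Hs) as (E & Hle & Hlt & Hge). rewrite E.
  set (p' := new_p k eps (st_dsum s)) in *.
  assert (Hp' : 0 < p' <= 1) by apply new_p_range.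
  assert (Hpp : p' <= st_p s) by (apply new_p_le_p; auto).
  pose proof (inv_tau _ _ _ HI) as Htau1.
  constructor; simpl; auto; try lia.
  - apply HI.
  - destruct (Rlt_dec p' 1) as [Hc|Hc]; [apply Hlt, Hc|].
    destruct (Hge Hc) as [-> _]. rewrite (inv_sitep _ _ _ HI). pose proof (inv_p _ _ _ HI). lra.
  - intros j Hj. destruct (inv_reports _ _ _ HI j Hj) as [Hn Hh].
    split; [specialize (Hle j); lia|].
    destruct (Rlt_dec p' 1) as [Hc|Hc]; [apply Hlt; auto|].
    destruct (Hge Hc) as (_ & -> & ->). rewrite Hh. pose proof (inv_p _ _ _ HI).
    replace (st_p s) with p' by lra. reflexivity.
  - apply HI.
  - apply HI.
Qed.

Lemma resample_wf l p pold s : 0 < p <= 1 -> p <= pold -> dist_wf (resample l p pold s).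
Proof.
  intros Hp Hpo. revert s. induction l as [|i l IH]; intros s; simpl; auto.
  assert (0 < p / pold <= 1).
  { split; [apply Rdiv_lt_0_compat; lra|].
    apply Rmult_le_reg_r with pold; [lra|]. field_simplify; lra. }
  split; [lra|split; intros _; [simpl; split; [lra|intros; apply IH]|apply IH]].
Qed.

Lemma boundary_wf k eps s : 0 < st_p s -> new_p k eps (st_dsum s) <= st_p s ->
  dist_wf (boundary k eps s).
Proof.
  intros H1 H2. unfold boundary.
  destruct (Rlt_dec (new_p k eps (st_dsum s)) 1); simpl; auto.
  apply dist_wf_bind; [|simpl; auto]. apply resample_wf; auto. apply new_p_range.
Qed.

(* The estimate the server would publish if the current site reported now. *)
Definition report_estimate (k : nat) (s : state) : R :=
  sumR (st_nhat s) k - st_nhat s (st_cur s) + INR (st_n s (st_cur s)) + 1 / st_p s.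

(* The state after the next event, its report (if [c]) and its doubling message, before any
   BoundaryReached. *)
Definition pre_boundary (k : nat) (s : state) (c : bool) : state :=
  let i := st_cur s in
  let ni := S (st_n s i) in
  let dn := if is_pow2 ni then upd (st_dn s) i ni else st_dn s in
  {| st_n := upd (st_n s) i ni; st_sitep := st_sitep s;
     st_nbar := if c then upd (st_nbar s) i ni else st_nbar s;
     st_nhat := if c then upd (st_nhat s) i (INR ni - 1 + 1 / st_p s) else st_nhat s;
     st_p := st_p s;
     st_pub := if c then sumR (upd (st_nhat s) i (INR ni - 1 + 1 / st_p s)) k else st_pub s;
     st_dn := dn; st_dsum := sumN dn k; st_tau := st_tau s;
     st_cur := i; st_last := st_last s |}.

Definition adversary_update (k : nat) (s : state) : state :=
  match Req_EM_T (st_pub s) (st_last s) with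
  | left _ => s
  | right _ =>
      {| st_n := st_n s; st_sitep := st_sitep s; st_nbar := st_nbar s; st_nhat := st_nhat s;
         st_p := st_p s; st_pub := st_pub s; st_dn := st_dn s; st_dsum := st_dsum s;
         st_tau := st_tau s; st_cur := next_site k (st_cur s); st_last := st_pub s |}
  end.

Definition step_given_coin (k : nat) (eps : R) (s : state) :
  bool -> dist (state * option nat * bool) :=
  match step k eps s with Flip _ f => f | _ => fun _ => Ret (s, None, false) end.

Lemma step_unfold k eps s : step k eps s = Flip (st_sitep s) (step_given_coin k eps s).
Proof. reflexivity. Qed.

Lemma step_given_coin_support k eps s c s' rep bd : server_inv k eps s ->
  in_support (step_given_coin k eps s c) (s', rep, bd) ->
  rep = (if c then Some (st_cur s) else None) /\
  exists s3, s' = adversary_update k s3 /\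
    if bd then (2 * st_tau s <= st_dsum (pre_boundary k s c))%nat /\
               in_support (boundary k eps (pre_boundary k s c)) s3
    else s3 = pre_boundary k s c.
Proof.
  intros HI Hs. unfold step_given_coin, step in Hs.
  apply in_support_bind in Hs. destruct Hs as [[s3 bd'] [Hd Hr]]. simpl in Hr.
  injection Hr as -> -> ->. split; [reflexivity|]. exists s3. split; [reflexivity|].
  set (i := st_cur s) in *. set (ni := S (st_n s i)) in *.
  assert (Hdn : (st_dn s i <= ni)%nat)
    by (destruct (inv_doubling _ _ _ HI i (inv_cur _ _ _ HI)); lia).
  assert (Hsum : sumN (upd (st_dn s) i ni) k = (st_dsum s + ni - st_dn s i)%nat).
  { pose proof (sumN_upd (st_dn s) i ni k (inv_cur _ _ _ HI)). rewrite (inv_dsum _ _ _ HI). lia. }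
  unfold pre_boundary; fold i ni.
  destruct (is_pow2 ni); destruct c; cbn -[INR sumR upd sumN boundary] in Hd |- *;
    rewrite <- ?Hsum in Hd; rewrite <- ?(inv_dsum _ _ _ HI).
  all: try match type of Hd with context [Nat.leb ?a ?b] => destruct (Nat.leb_spec a b) end.
  all: cbv beta iota in Hd.
  all: try (apply in_support_bind in Hd; destruct Hd as [s4 [Hb Hr]]; cbv beta in Hr).
  all: try match goal with H : in_support (Ret _) _ |- _ => simpl in H end.
  all: match goal with H : (_, _) = (_, _) |- _ => injection H as -> -> end; auto.
Qed.

Lemma pre_boundary_inv k eps s c : server_inv k eps s -> server_inv k eps (pre_boundary k s c).
Proof.
  intros HI. pose proof (inv_cur _ _ _ HI) as Hi.
  constructor; cbn -[INR sumR upd sumN is_pow2]; try apply HI.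
  - intros j Hj. destruct (inv_reports _ _ _ HI j Hj) as [Hn Hh].
    destruct (Nat.eq_dec j (st_cur s)) as [->|Hji].
    + rewrite upd_same.
      destruct c; rewrite ?upd_same; [split; [lia|reflexivity]|split; [lia|exact Hh]].
    + rewrite !upd_other by exact Hji. destruct c; rewrite ?upd_other by exact Hji; auto.
  - intros j Hj. destruct (Nat.eq_dec j (st_cur s)) as [->|Hji].
    + rewrite upd_same.
      pose proof (doubling_counter_step _ _ (inv_doubling _ _ _ HI _ Hi)) as Hd.
      destruct (is_pow2 _); rewrite ?upd_same; exact Hd.
    + rewrite upd_other by exact Hji.
      destruct (is_pow2 _); rewrite ?upd_other by exact Hji; apply HI; auto.
  - reflexivity.
Qed.

Lemma pre_boundary_dsum_ge k eps s c : server_inv k eps s ->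
  (st_dsum s <= st_dsum (pre_boundary k s c))%nat.
Proof.
  intros HI. rewrite (inv_dsum _ _ _ HI). simpl. destruct (is_pow2 _); [|lia].
  apply sumN_le. intros j Hj. destruct (Nat.eq_dec j (st_cur s)) as [->|Hji].
  - rewrite upd_same. destruct (inv_doubling _ _ _ HI (st_cur s) Hj). lia.
  - rewrite upd_other; auto.
Qed.

Lemma pre_boundary_pub k s : (1 <= st_cur s <= k)%nat ->
  st_pub (pre_boundary k s true) = report_estimate k s.
Proof.
  intros Hi. cbn -[INR sumR upd]. rewrite sumR_upd by exact Hi.
  unfold report_estimate. rewrite S_INR. ring.
Qed.

(* A fresh report at the current site raises its estimate from at most [n_i - 1 + 1/p] to
   [n_i + 1/p]. *)
Lemma report_estimate_gt_synced k eps s : server_inv k eps s ->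
  st_last s = sumR (st_nhat s) k -> st_last s < report_estimate k s.
Proof.
  intros HI HL. unfold report_estimate. rewrite HL.
  destruct (inv_reports _ _ _ HI (st_cur s) (inv_cur _ _ _ HI)) as [Hn ->].
  pose proof (inv_p _ _ _ HI).
  assert (0 < 1 / st_p s) by (apply Rdiv_lt_0_compat; lra).
  assert (INR (st_nbar s (st_cur s)) <= INR (st_n s (st_cur s))) by (apply le_INR; auto).
  pose proof (pos_INR (st_nbar s (st_cur s))).
  unfold estimate_of. destruct (Nat.eqb _ 0); lra.
Qed.

Definition with_cursor (s : state) (c : nat) (last : R) : state :=
  {| st_n := st_n s; st_sitep := st_sitep s; st_nbar := st_nbar s; st_nhat := st_nhat s;
     st_p := st_p s; st_pub := st_pub s; st_dn := st_dn s; st_dsum := st_dsum s;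
     st_tau := st_tau s; st_cur := c; st_last := last |}.

Lemma adversary_update_eq k s : adversary_update k s =
  with_cursor s (if Req_EM_T (st_pub s) (st_last s) then st_cur s else next_site k (st_cur s))
    (st_pub s).
Proof.
  unfold adversary_update. destruct (Req_EM_T (st_pub s) (st_last s)) as [E|E]; [|reflexivity].
  destruct s; simpl in *; subst; reflexivity.
Qed.

Record reach_inv (k : nat) (eps : R) (s : state) : Prop := {
  reach_server : server_inv k eps s;
  reach_synced : st_pub s = st_last s
}.

Lemma adversary_update_inv k eps s : (1 <= k)%nat -> server_inv k eps s ->
  reach_inv k eps (adversary_update k s).
Proof.
  intros Hk HI. rewrite adversary_update_eq. split; [|reflexivity].
  constructor; simpl; try apply HI.
  destruct (Req_EM_T _ _); [apply HI|apply next_site_range; auto].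
Qed.

Lemma after_doubling_spec k eps s c s' rep bd : (1 <= k)%nat -> 0 < eps -> server_inv k eps s ->
  in_support (step_given_coin k eps s c) (s', rep, bd) ->
  let pb := pre_boundary k s c in
  rep = (if c then Some (st_cur s) else None) /\
  exists s3, s' = adversary_update k s3 /\ server_inv k eps s3 /\
    st_n s3 = st_n pb /\ st_pub s3 = st_pub pb /\ st_cur s3 = st_cur pb /\
    st_last s3 = st_last pb /\ st_dsum s3 = st_dsum pb /\
    (bd = false -> s3 = pb) /\
    (bd = true -> st_tau s3 = st_dsum pb /\ st_p s3 = new_p k eps (st_dsum pb) /\
                  (2 * st_tau s <= st_dsum pb)%nat).
Proof.
  intros Hk He HI Hs. cbv zeta.
  destruct (step_given_coin_support _ _ _ _ _ _ _ HI Hs) as [Hrep [s3 [Hs' Hs3]]].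
  split; [exact Hrep|]. exists s3. split; [exact Hs'|].
  assert (Hpb : server_inv k eps (pre_boundary k s c)) by (apply pre_boundary_inv, HI).
  destruct bd.
  - destruct Hs3 as [Hle Hb].
    destruct (boundary_spec _ _ _ _ Hb) as [E _].
    assert (HI3 : server_inv k eps s3).
    { apply (boundary_inv k eps (pre_boundary k s c)); auto.
      change (st_tau (pre_boundary k s c)) with (st_tau s). lia. }
    rewrite E in HI3 |- *. cbn [st_n st_pub st_cur st_last st_dsum st_tau st_p].
    split; [exact HI3|]. repeat split; auto; discriminate.
  - subst s3. split; [exact Hpb|]. repeat split; auto; discriminate.
Qed.

Lemma step_given_coin_wf k eps s c : (1 <= k)%nat -> 0 < eps -> server_inv k eps s ->
  dist_wf (step_given_coin k eps s c).
Proof.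
  intros Hk He HI. pose proof (inv_p _ _ _ HI).
  unfold step_given_coin, step. apply dist_wf_bind; [|intros [s3 b] _; exact I].
  destruct (is_pow2 _); [|exact I].
  match goal with |- context [Nat.leb ?a ?b] => destruct (Nat.leb_spec a b) as [Hle|] end;
    [|exact I].
  apply dist_wf_bind; [|intros; exact I].
  destruct c; apply boundary_wf; cbn -[new_p] in *; try lra;
    apply new_p_le_p; auto; lia.
Qed.

Lemma step_wf k eps s : (1 <= k)%nat -> 0 < eps -> server_inv k eps s -> dist_wf (step k eps s).
Proof.
  intros Hk He HI. rewrite step_unfold. simpl.
  rewrite (inv_sitep _ _ _ HI). pose proof (inv_p _ _ _ HI).
  split; [lra|]. split; intros _; apply step_given_coin_wf; auto.
Qed.

Definition total_count (k : nat) (s : state) : nat := sumN (st_n s) k.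

Section OneStep.

Variables (k : nat) (eps : R) (s : state) (c : bool) (s' : state) (rep : option nat) (bd : bool).
Hypotheses (Hk : (1 <= k)%nat) (He : 0 < eps) (HR : reach_inv k eps s)
  (Hs : in_support (step_given_coin k eps s c) (s', rep, bd)).

Let HI : server_inv k eps s := reach_server _ _ _ HR.
Let Hspec := after_doubling_spec k eps s c s' rep bd Hk He HI Hs.

Lemma step_reach_inv : reach_inv k eps s'.
Proof. destruct Hspec as [_ [s3 [-> [HI3 _]]]]. apply adversary_update_inv; auto. Qed.

Lemma step_report : rep = (if c then Some (st_cur s) else None).
Proof. apply Hspec. Qed.

Lemma step_total_count : total_count k s' = S (total_count k s).
Proof.
  destruct Hspec as [_ [s3 [-> [_ [Hn _]]]]]. rewrite adversary_update_eq.
  unfold total_count. cbn [st_n with_cursor]. rewrite Hn. cbn [st_n pre_boundary].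
  pose proof (sumN_upd (st_n s) (st_cur s) (S (st_n s (st_cur s))) k (inv_cur _ _ _ HI)). lia.
Qed.

Lemma step_dsum_ge : (st_dsum s <= st_dsum s')%nat.
Proof.
  destruct Hspec as [_ [s3 [-> [_ (_ & _ & _ & _ & Hd & _)]]]]. rewrite adversary_update_eq.
  cbn [st_dsum with_cursor]. rewrite Hd. apply (pre_boundary_dsum_ge k eps), HI.
Qed.

Lemma step_cur : st_cur s' =
  if c then
    (if Req_EM_T (report_estimate k s) (st_last s) then st_cur s else next_site k (st_cur s))
  else st_cur s.
Proof.
  destruct Hspec as [_ [s3 [-> [_ (_ & Hpub & Hcur & Hlast & _)]]]]. rewrite adversary_update_eq.
  cbn [st_cur with_cursor]. rewrite Hpub, Hcur, Hlast.
  destruct c; [rewrite pre_boundary_pub by apply HI|]; cbn [st_pub st_cur st_last pre_boundary];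
    [|rewrite (reach_synced _ _ _ HR)]; destruct (Req_EM_T _ _); congruence.
Qed.

Lemma step_no_boundary : bd = false ->
  st_tau s' = st_tau s /\ st_p s' = st_p s /\
  if c then st_last s' < report_estimate k s'
  else report_estimate k s' = report_estimate k s + 1 /\ st_last s' = st_last s.
Proof.
  intros Hbd. pose proof step_cur as Hcur. pose proof step_reach_inv as HR'.
  destruct Hspec as [_ [s3 [-> [_ (_ & _ & _ & _ & _ & E & _)]]]]. rewrite (E Hbd) in *.
  rewrite adversary_update_eq in *. split; [reflexivity|split; [reflexivity|]].
  destruct c.
  - apply (report_estimate_gt_synced k eps); [apply HR'|reflexivity].
  - unfold report_estimate. rewrite Hcur. cbn -[INR sumR upd sumN is_pow2].
    rewrite (reach_synced _ _ _ HR), upd_same, S_INR. split; [ring|reflexivity].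
Qed.

Lemma step_boundary : bd = true ->
  st_tau s' = st_dsum s' /\ st_p s' = new_p k eps (st_dsum s') /\ (2 * st_tau s <= st_dsum s')%nat.
Proof.
  intros Hbd. destruct Hspec as [_ [s3 [-> [_ (_ & _ & _ & _ & Hd & _ & E)]]]].
  rewrite adversary_update_eq. cbn [st_tau st_p st_dsum with_cursor]. rewrite Hd. auto.
Qed.

End OneStep.

Lemma step_support k eps s a : in_support (step k eps s) a ->
  exists c, in_support (step_given_coin k eps s c) a.
Proof. rewrite step_unfold. intros [[_ H]|[_ H]]; eauto. Qed.

Lemma init_state_inv k eps : (1 <= k)%nat -> reach_inv k eps init_state.
Proof.
  intros Hk. split; [|reflexivity]. constructor; simpl; try lia; try lra; auto.
  - intros j _. apply doubling_counter_0.
  - symmetry. apply sumN_0.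
Qed.

Lemma prefix_inv k eps m s b : (1 <= k)%nat -> 0 < eps -> in_support (prefix k eps m) (s, b) ->
  reach_inv k eps s /\ total_count k s = m /\
  (b = true -> st_tau s = st_dsum s /\ st_p s = new_p k eps (st_tau s)).
Proof.
  intros Hk He. revert s b. induction m as [|m IH]; intros s b H.
  - simpl in H. injection H as -> ->. split; [apply init_state_inv; auto|].
    split; [apply sumN_0|discriminate].
  - cbn [prefix] in H. apply in_support_bind in H. destruct H as [[s0 b0] [H0 H1]].
    destruct (IH _ _ H0) as (HR & Hcount & _).
    cbv beta iota in H1. apply in_support_bind in H1. destruct H1 as [[[s' rep] bd] [H2 H3]].
    simpl in H3. injection H3 as -> ->.
    destruct (step_support _ _ _ _ H2) as [c Hc].
    split; [apply (step_reach_inv k eps s0 c s' rep bd); auto|].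
    split; [rewrite (step_total_count k eps s0 c s' rep bd); auto|].
    intros ->. destruct (step_boundary k eps s0 c s' rep true) as (Ht & Hp & _); auto.
    rewrite Ht. auto.
Qed.

Lemma dsum_le_total_count k eps s : server_inv k eps s -> (st_dsum s <= total_count k s)%nat.
Proof.
  intros HI. rewrite (inv_dsum _ _ _ HI). apply sumN_le.
  intros j Hj. destruct (inv_doubling _ _ _ HI j Hj). auto.
Qed.

Record window_inv (k : nat) (eps : R) (n0 m : nat) (s : state) : Prop := {
  win_reach : reach_inv k eps s;
  win_p : st_p s = new_p k eps (st_tau s);
  win_tau_dsum : (st_tau s <= st_dsum s)%nat;
  win_tau : (n0 < 2 * st_tau s)%nat;
  win_count_lo : (n0 <= total_count k s)%nat;
  win_count_hi : (total_count k s + m <= 2 * n0)%nat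
}.

Lemma window_inv_start k eps n0 s : (1 <= k)%nat -> 0 < eps -> (1 <= n0)%nat ->
  in_support (prefix k eps n0) (s, true) -> window_inv k eps n0 n0 s.
Proof.
  intros Hk He Hn0 Hpre.
  destruct (prefix_inv k eps n0 s true Hk He Hpre) as (HR & Hcount & Hround).
  destruct (Hround eq_refl) as [Htau Hp]. pose proof (reach_server _ _ _ HR) as HI.
  constructor; auto; try lia.
  rewrite Htau, (inv_dsum _ _ _ HI), <- Hcount. unfold total_count in *.
  apply sumN_lt_double; [|lia].
  intros j Hj. destruct (inv_doubling _ _ _ HI j Hj) as [Hle Hpow].
  destruct (Nat.eq_dec (st_n s j) 0) as [->|Hnz]; [lia|].
  destruct (Hpow ltac:(lia)). split; intros; lia.
Qed.

Lemma window_inv_step k eps n0 m s c s' rep bd : (1 <= k)%nat -> 0 < eps ->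
  window_inv k eps n0 (S m) s -> in_support (step_given_coin k eps s c) (s', rep, bd) ->
  window_inv k eps n0 m s'.
Proof.
  intros Hk He HW Hs. pose proof (win_reach _ _ _ _ _ HW) as HR.
  pose proof (step_total_count k eps s c s' rep bd Hk He HR Hs) as Hcount.
  pose proof (step_dsum_ge k eps s c s' rep bd Hk He HR Hs) as Hdsum.
  pose proof (win_tau_dsum _ _ _ _ _ HW). pose proof (win_tau _ _ _ _ _ HW).
  pose proof (win_count_lo _ _ _ _ _ HW). pose proof (win_count_hi _ _ _ _ _ HW).
  constructor; try lia.
  - apply (step_reach_inv k eps s c s' rep bd); auto.
  - destruct bd.
    + destruct (step_boundary k eps s c s' rep true) as (Ht & Hp & _); auto. rewrite Ht; auto.
    + destruct (step_no_boundary k eps s c s' rep false) as (Ht & Hp & _); auto.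
      rewrite Ht, Hp. apply HW.
  - destruct bd.
    + destruct (step_boundary k eps s c s' rep true) as (Ht & _); auto. lia.
    + destruct (step_no_boundary k eps s c s' rep false) as (Ht & _); auto. lia.
  - destruct bd.
    + destruct (step_boundary k eps s c s' rep true) as (Ht & _ & Hle); auto. lia.
    + destruct (step_no_boundary k eps s c s' rep false) as (Ht & _); auto. lia.
Qed.

(* A report leaves the published estimate unchanged, and so stalls the adversary, only when
   [report_estimate = st_last]. Each stall consumes one unit of this budget: one for the
   boundary still to come in the window, one for an estimate lowered by resampling. *)
Definition stall_budget (k n0 : nat) (s : state) : nat :=
  ((if Nat.leb (st_tau s) n0 then 1 else 0) +
   (if Rle_dec (report_estimate k s) (st_last s) then 1 else 0))%nat.

Lemma stall_budget_le_2 k n0 s : (stall_budget k n0 s <= 2)%nat.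
Proof. unfold stall_budget. destruct (Nat.leb _ _), (Rle_dec _ _); lia. Qed.

Lemma stall_budget_step k eps n0 m s c s' rep bd : (1 <= k)%nat -> 0 < eps ->
  window_inv k eps n0 (S m) s -> in_support (step_given_coin k eps s c) (s', rep, bd) ->
  (stall_budget k n0 s' <= stall_budget k n0 s)%nat /\
  (report_estimate k s = st_last s -> (stall_budget k n0 s' < stall_budget k n0 s)%nat).
Proof.
  intros Hk He HW Hs. pose proof (win_reach _ _ _ _ _ HW) as HR.
  unfold stall_budget. destruct bd.
  - destruct (step_boundary k eps s c s' rep true) as (Ht & _ & Hle); auto.
    pose proof (step_total_count k eps s c s' rep true Hk He HR Hs).
    pose proof (step_reach_inv k eps s c s' rep true Hk He HR Hs) as HR'.
    pose proof (dsum_le_total_count _ _ _ (reach_server _ _ _ HR')).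
    pose proof (win_tau _ _ _ _ _ HW). pose proof (win_count_hi _ _ _ _ _ HW).
    destruct (Nat.leb_spec (st_tau s) n0); [|lia].
    destruct (Nat.leb_spec (st_tau s') n0); [lia|].
    split; [|intros E]; destruct (Rle_dec _ (st_last s')), (Rle_dec (report_estimate k s) _);
      lia || lra.
  - destruct (step_no_boundary k eps s c s' rep false) as (Ht & _ & Hest); auto.
    rewrite Ht. destruct c.
    + destruct (Rle_dec _ (st_last s')); [lra|].
      split; [lia|intros E]. destruct (Rle_dec (report_estimate k s) _); [lia|lra].
    + destruct Hest as [-> ->].
      split; [|intros E]; destruct (Rle_dec (report_estimate k s + 1) _),
        (Rle_dec (report_estimate k s) _); lia || lra.
Qed.

Definition mem_count (c : nat) (acc : list nat) : nat :=
  if in_dec Nat.eq_dec c acc then 1%nat else 0%nat.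

(* [acc] lists the reports so far, [c] is the adversary's current site and [d] counts its
   moves; every site it moved away from had just reported. *)
Definition visited_inv (k K c : nat) (acc : list nat) (d : nat) : Prop :=
  (exists W, NoDup W /\ incl W acc /\ (Nat.min (d + mem_count c acc) K <= length W)%nat) /\
  (forall j, (1 <= j)%nat -> (j + d < K)%nat -> ~ In (Nat.iter j (next_site k) c) acc).

Lemma visited_inv_nil k K c : visited_inv k K c nil 0.
Proof.
  split.
  - exists nil. split; [constructor|]. split; [intros x []|]. unfold mem_count. simpl. lia.
  - intros j _ _ [].
Qed.

Lemma distinct_snoc W acc c : NoDup W -> incl W acc ->
  exists W', NoDup W' /\ incl W' (acc ++ c :: nil) /\
    (length W + 1 - mem_count c acc <= length W')%nat.
Proof.
  intros HW Hincl. unfold mem_count. destruct (in_dec Nat.eq_dec c acc) as [Hin|Hin].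
  - exists W. split; [auto|]. split; [intros x Hx; apply in_or_app; left; auto|lia].
  - exists (c :: W). split; [constructor; auto|].
    split; [intros x [<-|Hx]; apply in_or_app; [right; left|left]; auto|simpl; lia].
Qed.

Lemma visited_inv_move k K c acc d : (1 <= c <= k)%nat -> (K <= k)%nat ->
  visited_inv k K c acc d -> visited_inv k K (next_site k c) (acc ++ c :: nil) (S d).
Proof.
  intros Hc HK [[W (HW & Hincl & Hlen)] Hfresh].
  assert (Hnext : (S d < K)%nat -> ~ In (next_site k c) (acc ++ c :: nil)).
  { intros Hl Hn. apply in_app_or in Hn. destruct Hn as [Hn|[Hn|[]]].
    - apply (Hfresh 1%nat); auto; lia.
    - apply (iter_next_site_neq k c 1 Hc); [lia|]. simpl. auto. }
  split.
  - destruct (distinct_snoc W acc c HW Hincl) as (W' & HW' & Hincl' & Hlen').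
    exists W'. split; [auto|split; [auto|]].
    unfold mem_count in *. destruct (in_dec Nat.eq_dec (next_site k c) _) as [Hn|Hn].
    + assert (K <= S d)%nat
        by (destruct (Nat.lt_ge_cases (S d) K) as [Hl|]; [destruct (Hnext Hl Hn)|auto]).
      destruct (in_dec Nat.eq_dec c acc); lia.
    + destruct (in_dec Nat.eq_dec c acc); lia.
  - intros j Hj Hjd Hin. rewrite <- Nat.iter_succ_r in Hin.
    apply in_app_or in Hin. destruct Hin as [Hin|[Hin|[]]].
    + apply (Hfresh (S j)); auto; lia.
    + apply (iter_next_site_neq k c (S j) Hc); [lia|auto].
Qed.

Lemma visited_inv_stay k K c acc d : (1 <= c <= k)%nat -> (K <= k)%nat ->
  visited_inv k K c acc d -> visited_inv k K c (acc ++ c :: nil) d.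
Proof.
  intros Hc HK [[W (HW & Hincl & Hlen)] Hfresh]. split.
  - destruct (distinct_snoc W acc c HW Hincl) as (W' & HW' & Hincl' & Hlen').
    exists W'. split; [auto|split; [auto|]].
    unfold mem_count in *. destruct (in_dec Nat.eq_dec c (acc ++ c :: nil)) as [_|Hn].
    + destruct (in_dec Nat.eq_dec c acc); lia.
    + exfalso. apply Hn, in_or_app. right; left; auto.
  - intros j Hj Hjd Hin. apply in_app_or in Hin. destruct Hin as [Hin|[Hin|[]]].
    + apply (Hfresh j); auto.
    + apply (iter_next_site_neq k c j Hc); [lia|auto].
Qed.

Lemma visited_inv_distinct k K c acc d : (K <= d)%nat -> visited_inv k K c acc d ->
  (K <= distinct_count acc)%nat.
Proof.
  intros HKd [[W (HW & Hincl & Hlen)] _].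
  enough (length W <= distinct_count acc)%nat by lia.
  unfold distinct_count. apply NoDup_incl_length; auto.
  intros x Hx. apply nodup_In, Hincl, Hx.
Qed.

Definition window_tail (k : nat) (eps : R) (m : nat) (g : list nat -> R) :
  state * option nat * bool -> R :=
  fun '(s', rep, _) =>
    Expect (window k eps m s') (fun l => g (match rep with Some i => i :: l | None => l end)).

Lemma Expect_window_S k eps m s g :
  Expect (window k eps (S m) s) g =
  st_sitep s * Expect (step_given_coin k eps s true) (window_tail k eps m g) +
  (1 - st_sitep s) * Expect (step_given_coin k eps s false) (window_tail k eps m g).
Proof.
  cbn [window]. rewrite Expect_bind, step_unfold. cbn [Expect].
  f_equal; f_equal; apply Expect_ext; intros [[s' rep] bd];
    unfold window_tail; rewrite Expect_bind; reflexivity.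
Qed.

Lemma window_wf k eps n0 m s : (1 <= k)%nat -> 0 < eps -> window_inv k eps n0 m s ->
  dist_wf (window k eps m s).
Proof.
  intros Hk He. revert s. induction m as [|m IH]; intros s HW; [exact I|].
  cbn [window]. apply dist_wf_bind.
  - apply step_wf; auto. apply HW.
  - intros [[s' rep] bd] Ha. apply dist_wf_bind; [|intros; exact I].
    destruct (step_support _ _ _ _ Ha) as [c Hc].
    apply IH, (window_inv_step k eps n0 m s c s' rep bd); auto.
Qed.

Fixpoint harmonic_from (T m : nat) : R :=
  match m with O => 0 | S m' => / INR T + harmonic_from (S T) m' end.

Definition success (k : nat) (l : list nat) : R :=
  match excluded_middle_informative (INR k / 8 < INR (distinct_count l)) with
  | left _ => 1 | right _ => 0 end.

Lemma success_range k l : 0 <= success k l <= 1.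
Proof. unfold success. destruct (excluded_middle_informative _); lra. Qed.

Section FailureBound.

Variables (k : nat) (eps : R) (n0 xn : nat) (u th rho : R).

Let c := sqrt (INR k) / (2 * eps).

Hypotheses (Hk : (1 <= k)%nat) (He : 0 < eps) (Hn0 : 8 * c <= INR n0)
  (Hxk : (S xn <= k)%nat) (Hxr : INR k / 8 < INR (S xn))
  (Hth : 0 <= th <= 1) (Hu : 1 <= u) (Huth : (1 <= xn)%nat -> 1 <= u * (1 - th))
  (Hrho : 0 < rho <= 1 - th / 8).

Let c_pos : 0 < c.
Proof. apply Rdiv_lt_0_compat; [apply sqrt_lt_R0, lt_0_INR; lia|lra]. Qed.

(* Bound on the failure probability with [m] events to go, event count [T], stall budget [b]
   and [d] moves made so far. A move shrinks it by [1 - th]; the factor [exp (- th c / T)]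
   pays for the move made with probability [>= c / T] at count [T], and each stall that may
   still occur costs [1 / rho]. *)
Definition fail_bound (m T b d : nat) : R :=
  if Nat.leb (S xn) d then 0 else u ^ (xn - d) * exp (- (th * c * harmonic_from T m)) / rho ^ b.

Lemma fail_bound_nonneg m T b d : 0 <= fail_bound m T b d.
Proof.
  unfold fail_bound. destruct (Nat.leb _ _); [lra|].
  apply Rmult_le_pos; [apply Rmult_le_pos; [apply pow_le; lra|left; apply exp_pos]|].
  left; apply Rinv_0_lt_compat, pow_lt; lra.
Qed.

Lemma fail_bound_S m T b d :
  fail_bound (S m) T b d = exp (- (th * (c / INR T))) * fail_bound m (S T) b d.
Proof.
  unfold fail_bound. destruct (Nat.leb _ _); [ring|]. cbn [harmonic_from].
  replace (- (th * c * (/ INR T + harmonic_from (S T) m)))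
    with (- (th * (c / INR T)) + - (th * c * harmonic_from (S T) m)) by (unfold Rdiv; ring).
  rewrite exp_plus. unfold Rdiv. ring.
Qed.

Lemma fail_bound_budget_S m T b d : fail_bound m T (S b) d = fail_bound m T b d / rho.
Proof.
  unfold fail_bound. destruct (Nat.leb _ _); [unfold Rdiv; ring|].
  cbn [pow]. field. split; [apply pow_nonzero|]; lra.
Qed.

Lemma fail_bound_budget_mono m T b b' d : (b' <= b)%nat ->
  fail_bound m T b' d <= fail_bound m T b d.
Proof.
  intros Hb. induction Hb as [|b Hb IH]; [lra|].
  rewrite fail_bound_budget_S. pose proof (fail_bound_nonneg m T b d).
  apply Rle_trans with (fail_bound m T b d); [exact IH|].
  unfold Rdiv. rewrite <- (Rmult_1_r (fail_bound m T b d)) at 1.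
  apply Rmult_le_compat_l; [lra|]. rewrite <- Rinv_1. apply Rinv_le_contravar; lra.
Qed.

Lemma fail_bound_move m T b d : fail_bound m T b (S d) <= (1 - th) * fail_bound m T b d.
Proof.
  pose proof (fail_bound_nonneg m T b d) as H0. unfold fail_bound in *.
  destruct (Nat.leb_spec (S xn) d) as [H1|H1].
  - destruct (Nat.leb_spec (S xn) (S d)); [lra|lia].
  - destruct (Nat.leb_spec (S xn) (S d)) as [H2|H2]; [nra|].
    replace (xn - d)%nat with (S (xn - S d)) by lia. cbn [pow].
    set (Y := u ^ (xn - S d) * exp (- (th * c * harmonic_from T m)) / rho ^ b).
    assert (0 <= Y).
    { apply Rmult_le_pos; [apply Rmult_le_pos; [apply pow_le; lra|left; apply exp_pos]|].
      left; apply Rinv_0_lt_compat, pow_lt; lra. }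
    specialize (Huth ltac:(lia)).
    replace (u * u ^ (xn - S d) * exp (- (th * c * harmonic_from T m)) / rho ^ b) with (u * Y)
      by (unfold Y, Rdiv; ring).
    nra.
Qed.

Lemma fail_bound_progress m T b d sp : (1 <= T)%nat -> c / INR T <= sp <= 1 ->
  sp * fail_bound m (S T) b (S d) + (1 - sp) * fail_bound m (S T) b d <= fail_bound (S m) T b d.
Proof.
  intros HT Hsp. rewrite fail_bound_S. pose proof c_pos.
  assert (0 <= c / INR T) by (apply Rdiv_le_0_compat; [lra|apply lt_0_INR; lia]).
  pose proof (fail_bound_move m (S T) b d) as Hmove.
  pose proof (fail_bound_nonneg m (S T) b d) as HX.
  pose proof (exp_ineq1_le (- (th * (c / INR T)))) as Hexp.
  set (X := fail_bound m (S T) b d) in *. set (q := c / INR T) in *.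
  assert (sp * fail_bound m (S T) b (S d) <= sp * ((1 - th) * X))
    by (apply Rmult_le_compat_l; lra).
  assert (th * q * X <= th * sp * X) by (apply Rmult_le_compat_r; [|apply Rmult_le_compat_l]; lra).
  assert ((1 - th * q) * X <= exp (- (th * q)) * X) by (apply Rmult_le_compat_r; lra).
  nra.
Qed.

Lemma fail_bound_stall m T b d : (1 <= b)%nat -> rho <= exp (- (th * (c / INR T))) ->
  fail_bound m (S T) (b - 1) d <= fail_bound (S m) T b d.
Proof.
  intros Hb Hr. rewrite fail_bound_S. replace b with (S (b - 1)) at 2 by lia.
  rewrite fail_bound_budget_S. pose proof (fail_bound_nonneg m (S T) (b - 1) d).
  set (X := fail_bound m (S T) (b - 1) d) in *.
  replace (exp (- (th * (c / INR T))) * (X / rho)) with (X * (exp (- (th * (c / INR T))) / rho))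
    by (unfold Rdiv; ring).
  rewrite <- (Rmult_1_r X) at 1. apply Rmult_le_compat_l; [lra|].
  apply Rmult_le_reg_r with rho; [lra|]. unfold Rdiv. rewrite Rmult_assoc, Rinv_l; lra.
Qed.

Lemma report_prob_ge m s : window_inv k eps n0 m s ->
  (1 <= total_count k s)%nat /\ c / INR (total_count k s) <= st_sitep s <= 1 /\
  c / INR (total_count k s) <= 1 / 8.
Proof.
  intros HW. pose proof c_pos. pose proof (win_count_lo _ _ _ _ _ HW) as Hlo.
  pose proof (reach_server _ _ _ (win_reach _ _ _ _ _ HW)) as HI.
  set (T := total_count k s) in *.
  assert (Hn0p : (1 <= n0)%nat) by (destruct n0; [simpl in Hn0; lra|lia]).
  assert (HTr : INR n0 <= INR T) by (apply le_INR; auto).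
  assert (HTp : 0 < INR T) by (apply lt_0_INR; lia).
  assert (Hc8 : c / INR T <= 1 / 8).
  { apply Rmult_le_reg_r with (INR T); auto. unfold Rdiv. rewrite Rmult_assoc, Rinv_l; lra. }
  split; [lia|split; [|exact Hc8]].
  rewrite (inv_sitep _ _ _ HI). split; [|apply HI].
  rewrite (win_p _ _ _ _ _ HW). eapply Rle_trans; [|apply new_p_ge; auto; apply HI].
  apply Rmin_glb; [lra|].
  assert (Htau : (st_tau s <= T)%nat).
  { pose proof (win_tau_dsum _ _ _ _ _ HW). pose proof (dsum_le_total_count _ _ _ HI). lia. }
  assert (Htr : INR (st_tau s) <= INR T) by (apply le_INR; auto).
  assert (Htp : 0 < INR (st_tau s)) by (apply lt_0_INR; apply HI).
  replace (sqrt (INR k) / (2 * eps * INR (st_tau s))) with (c / INR (st_tau s))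
    by (unfold c; field; lra).
  unfold Rdiv. apply Rmult_le_compat_l; [lra|]. apply Rinv_le_contravar; auto.
Qed.

Definition window_claim (m : nat) : Prop :=
  forall s acc d, window_inv k eps n0 m s -> visited_inv k (S xn) (st_cur s) acc d ->
  1 - fail_bound m (total_count k s) (stall_budget k n0 s) d <=
  Expect (window k eps m s) (fun l => success k (acc ++ l)).

Lemma window_claim_0 : window_claim 0.
Proof.
  intros s acc d HW HV. cbn [window Expect]. rewrite app_nil_r. unfold fail_bound.
  destruct (Nat.leb_spec (S xn) d) as [Hd|Hd].
  - enough (success k acc = 1) by lra. unfold success.
    destruct (excluded_middle_informative _) as [_|Hn]; [reflexivity|exfalso; apply Hn].
    apply le_INR in Hd as Hd'. pose proof (le_INR _ _ (visited_inv_distinct _ _ _ _ _ Hd HV)). lra.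
  - cbn [harmonic_from]. rewrite Rmult_0_r, Ropp_0, exp_0, Rmult_1_r.
    set (b := stall_budget k n0 s).
    assert (1 <= u ^ (xn - d)) by (apply pow_R1_Rle; lra).
    assert (0 < rho ^ b) by (apply pow_lt; lra).
    assert (rho ^ b <= 1) by (rewrite <- (pow1 b); apply pow_incr; lra).
    assert (1 <= / rho ^ b) by (rewrite <- Rinv_1; apply Rinv_le_contravar; auto).
    assert (1 <= u ^ (xn - d) / rho ^ b) by (unfold Rdiv; nra).
    pose proof (success_range k acc). lra.
Qed.

Lemma step_tail_ge m s acc c0 Y : window_inv k eps n0 (S m) s ->
  (forall s' rep bd, in_support (step_given_coin k eps s c0) (s', rep, bd) ->
     1 - Y <= window_tail k eps m (fun l => success k (acc ++ l)) (s', rep, bd)) ->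
  1 - Y <=
  Expect (step_given_coin k eps s c0) (window_tail k eps m (fun l => success k (acc ++ l))).
Proof.
  intros HW HY. apply (Expect_lower_bound _ _ _ 1).
  - apply step_given_coin_wf; auto. apply HW.
  - intros [[s' rep] bd] Hs. apply Expect_bounds; [lra| |intros; apply success_range].
    apply (window_wf k eps n0); auto. apply (window_inv_step k eps n0 m s c0 s' rep bd); auto.
  - intros [[s' rep] bd] Hs. auto.
Qed.

Lemma window_tail_ge m s c0 s' rep bd acc d : window_claim m -> window_inv k eps n0 (S m) s ->
  in_support (step_given_coin k eps s c0) (s', rep, bd) ->
  visited_inv k (S xn) (st_cur s') (if c0 then acc ++ st_cur s :: nil else acc) d ->
  1 - fail_bound m (S (total_count k s)) (stall_budget k n0 s') d <=
  window_tail k eps m (fun l => success k (acc ++ l)) (s', rep, bd).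
Proof.
  intros IH HW Hs HV. pose proof (win_reach _ _ _ _ _ HW) as HR.
  cbn [window_tail]. rewrite (step_report k eps s c0 s' rep bd); auto.
  rewrite <- (step_total_count k eps s c0 s' rep bd); auto.
  rewrite (Expect_ext _ _ (fun l => success k ((if c0 then acc ++ st_cur s :: nil else acc) ++ l)))
    by (intros; destruct c0; [rewrite <- app_assoc|]; reflexivity).
  apply IH; auto. apply (window_inv_step k eps n0 m s c0 s' rep bd); auto.
Qed.

Lemma window_claim_stall m : window_claim m -> forall s acc d,
  window_inv k eps n0 (S m) s -> visited_inv k (S xn) (st_cur s) acc d ->
  report_estimate k s = st_last s ->
  1 - fail_bound (S m) (total_count k s) (stall_budget k n0 s) d <=
  Expect (window k eps (S m) s) (fun l => success k (acc ++ l)).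
Proof.
  intros IH s acc d HW HV Hstall. rewrite Expect_window_S. pose proof c_pos.
  pose proof (win_reach _ _ _ _ _ HW) as HR. pose proof (inv_cur _ _ _ (reach_server _ _ _ HR)).
  destruct (report_prob_ge _ _ HW) as (HT & Hsp & Hc8).
  set (T := total_count k s) in *. set (b := stall_budget k n0 s).
  assert (Hb : (1 <= b)%nat).
  { unfold b, stall_budget. destruct (Rle_dec _ _); [lia|lra]. }
  assert (Hr : rho <= exp (- (th * (c / INR T)))).
  { pose proof (exp_ineq1_le (- (th * (c / INR T)))).
    assert (0 <= c / INR T) by (apply Rdiv_le_0_compat; [lra|apply lt_0_INR; lia]). nra. }
  pose proof (fail_bound_stall m T b d Hb Hr).
  set (Y := fail_bound m (S T) (b - 1) d) in *.
  assert (Hbranch : forall c0, 1 - Y <=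
    Expect (step_given_coin k eps s c0) (window_tail k eps m (fun l => success k (acc ++ l)))).
  { intros c0. apply step_tail_ge; auto. intros s' rep bd Hs.
    eapply Rle_trans; [|apply (window_tail_ge m s c0 s' rep bd acc d); auto].
    - change (total_count k s) with T.
      destruct (stall_budget_step k eps n0 m s c0 s' rep bd) as [_ Hlt]; auto.
      specialize (Hlt Hstall). fold b in Hlt.
      assert (Hle : (stall_budget k n0 s' <= b - 1)%nat) by lia.
      pose proof (fail_bound_budget_mono m (S T) (b - 1) (stall_budget k n0 s') d Hle).
      unfold Y; lra.
    - rewrite (step_cur k eps s c0 s' rep bd); auto.
      destruct c0; [|exact HV]. destruct (Req_EM_T _ _); [|contradiction].
      apply visited_inv_stay; auto. }
  assert (Hsp0 : 0 <= c / INR T) by (apply Rdiv_le_0_compat; [lra|apply lt_0_INR; lia]).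
  pose proof (convex_comb_le (st_sitep s) _ _ _ _ ltac:(lra) (Hbranch true) (Hbranch false)).
  lra.
Qed.

Lemma window_claim_progress m : window_claim m -> forall s acc d,
  window_inv k eps n0 (S m) s -> visited_inv k (S xn) (st_cur s) acc d ->
  report_estimate k s <> st_last s ->
  1 - fail_bound (S m) (total_count k s) (stall_budget k n0 s) d <=
  Expect (window k eps (S m) s) (fun l => success k (acc ++ l)).
Proof.
  intros IH s acc d HW HV Hmove. rewrite Expect_window_S. pose proof c_pos.
  pose proof (win_reach _ _ _ _ _ HW) as HR. pose proof (inv_cur _ _ _ (reach_server _ _ _ HR)).
  destruct (report_prob_ge _ _ HW) as (HT & Hsp & _).
  set (T := total_count k s) in *. set (b := stall_budget k n0 s).
  assert (Hbranch : forall c0 : bool, 1 - fail_bound m (S T) b (if c0 then S d else d) <=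
    Expect (step_given_coin k eps s c0) (window_tail k eps m (fun l => success k (acc ++ l)))).
  { intros c0. apply step_tail_ge; auto. intros s' rep bd Hs.
    eapply Rle_trans; [|apply (window_tail_ge m s c0 s' rep bd acc (if c0 then S d else d)); auto].
    - change (total_count k s) with T.
      destruct (stall_budget_step k eps n0 m s c0 s' rep bd) as [Hle _]; auto.
      pose proof (fail_bound_budget_mono m (S T) b (stall_budget k n0 s')
                    (if c0 then S d else d) Hle).
      lra.
    - rewrite (step_cur k eps s c0 s' rep bd); auto.
      destruct c0; [|exact HV]. destruct (Req_EM_T _ _); [contradiction|].
      apply visited_inv_move; auto. }
  assert (Hsp0 : 0 <= c / INR T) by (apply Rdiv_le_0_compat; [lra|apply lt_0_INR; lia]).
  pose proof (convex_comb_le (st_sitep s) _ _ _ _ ltac:(lra) (Hbranch true) (Hbranch false)).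
  pose proof (fail_bound_progress m T b d (st_sitep s) HT Hsp). lra.
Qed.

Lemma window_claim_all m : window_claim m.
Proof.
  induction m as [|m IH]; [apply window_claim_0|].
  intros s acc d HW HV. destruct (Req_EM_T (report_estimate k s) (st_last s)).
  - apply window_claim_stall; auto.
  - apply window_claim_progress; auto.
Qed.

Lemma window_success_ge s : window_inv k eps n0 n0 s ->
  1 - fail_bound n0 n0 2 0 <= Expect (window k eps n0 s) (success k).
Proof.
  intros HW.
  assert (HT : total_count k s = n0).
  { pose proof (win_count_lo _ _ _ _ _ HW). pose proof (win_count_hi _ _ _ _ _ HW). lia. }
  pose proof (window_claim_all n0 s nil 0%nat HW (visited_inv_nil k (S xn) (st_cur s))) as H.
  rewrite HT in H. cbn [app] in H. eapply Rle_trans; [|exact H].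
  pose proof (fail_bound_budget_mono n0 n0 2 (stall_budget k n0 s) 0 (stall_budget_le_2 k n0 s)).
  lra.
Qed.

End FailureBound.

(* Tangent-line bound [1 / t >= (2 a - t) / a ^ 2], summed over the [m] terms. *)
Lemma harmonic_from_ge a m T : 0 < a -> (1 <= T)%nat ->
  (2 * a * INR m - INR m * INR T - INR m * (INR m - 1) / 2) / (a * a) <= harmonic_from T m.
Proof.
  intros Ha. revert T. induction m as [|m IH]; intros T HT.
  - simpl. unfold Rdiv. lra.
  - cbn [harmonic_from]. specialize (IH (S T) ltac:(lia)).
    assert (HTp : 0 < INR T) by (apply lt_0_INR; lia).
    assert (Htan : (2 * a - INR T) / (a * a) <= / INR T).
    { assert (/ INR T - (2 * a - INR T) / (a * a) = (INR T - a) ^ 2 / (INR T * (a * a)))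
        by (field; lra).
      assert (0 <= (INR T - a) ^ 2 / (INR T * (a * a))).
      { apply Rdiv_le_0_compat; [apply pow2_ge_0|]. apply Rmult_lt_0_compat; nra. }
      lra. }
    rewrite S_INR in IH |- *.
    replace ((2 * a * (INR m + 1) - (INR m + 1) * INR T - (INR m + 1) * (INR m + 1 - 1) / 2)
             / (a * a))
      with ((2 * a - INR T) / (a * a) +
            (2 * a * INR m - INR m * (INR T + 1) - INR m * (INR m - 1) / 2) / (a * a))
      by (field; lra).
    lra.
Qed.

Lemma harmonic_from_diag_ge n : (1 <= n)%nat -> 2 / 3 <= harmonic_from n n.
Proof.
  intros Hn. assert (Hp : 0 < INR n) by (apply lt_0_INR; lia).
  pose proof (harmonic_from_ge (3 * INR n / 2) n n ltac:(lra) Hn) as H.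
  replace ((2 * (3 * INR n / 2) * INR n - INR n * INR n - INR n * (INR n - 1) / 2) /
           (3 * INR n / 2 * (3 * INR n / 2))) with (2 / 3 + 2 / (9 * INR n)) in H by (field; lra).
  assert (0 < 2 / (9 * INR n)) by (apply Rdiv_lt_0_compat; lra).
  lra.
Qed.

Lemma exp_ge_square x : 0 <= x -> (1 + x / 2) ^ 2 <= exp x.
Proof.
  intros Hx. replace x with (x / 2 + x / 2) at 2 by field. rewrite exp_plus.
  pose proof (exp_ineq1_le (x / 2)). simpl. rewrite Rmult_1_r. apply Rmult_le_compat; lra.
Qed.

Lemma exp_INR_mult n y : exp (INR n * y) = exp y ^ n.
Proof.
  induction n as [|n IH]; simpl.
  - rewrite Rmult_0_l. apply exp_0.
  - rewrite <- IH, <- exp_plus. f_equal. destruct n; simpl; ring.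
Qed.

Lemma fail_bound_few_sites k eps n0 : (1 <= n0)%nat -> 1 / 2 < sqrt (INR k) / (2 * eps) ->
  fail_bound k eps 0 1 1 (7 / 8) n0 n0 2 0 <= exp (- (sqrt (INR k) / (2 * eps) / 16)).
Proof.
  intros Hn0 Hc. set (c := sqrt (INR k) / (2 * eps)) in *.
  unfold fail_bound. cbn [Nat.leb Nat.sub]. rewrite pow1. fold c.
  pose proof (harmonic_from_diag_ge n0 Hn0).
  assert (exp (- (1 * c * harmonic_from n0 n0)) <= exp (- (2 / 3 * c)))
    by (apply exp_le_compat; nra).
  assert (E1 : (1 + (29 / 48 * c) / 2) ^ 2 <= exp (29 / 48 * c)) by (apply exp_ge_square; lra).
  assert (E2 : exp (- (2 / 3 * c)) * exp (29 / 48 * c) = exp (- (c / 16)))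
    by (rewrite <- exp_plus; f_equal; field).
  assert (64 / 49 <= (1 + (29 / 48 * c) / 2) ^ 2) by nra.
  pose proof (exp_pos (- (2 / 3 * c))).
  replace ((7 / 8) ^ 2) with (49 / 64) by field.
  nra.
Qed.

Lemma fail_bound_many_sites k eps n0 xn : (1 <= n0)%nat -> (1 <= xn)%nat ->
  4 * INR xn <= sqrt (INR k) / (2 * eps) ->
  fail_bound k eps xn 2 (1 / 2) (15 / 16) n0 n0 2 0 <= exp (- (sqrt (INR k) / (2 * eps) / 16)).
Proof.
  intros Hn0 Hxn Hcx. set (c := sqrt (INR k) / (2 * eps)) in *.
  unfold fail_bound. cbn [Nat.leb]. rewrite Nat.sub_0_r. fold c.
  pose proof (harmonic_from_diag_ge n0 Hn0).
  assert (Hx1 : 1 <= INR xn) by (apply (le_INR 1 xn); lia).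
  assert (exp (- (1 / 2 * c * harmonic_from n0 n0)) <= exp (- (1 / 3 * c)))
    by (apply exp_le_compat; nra).
  assert (E1 : exp (13 / 12 * INR xn) <= exp (13 / 48 * c)) by (apply exp_le_compat; lra).
  rewrite Rmult_comm, exp_INR_mult in E1.
  assert (E2 : (1 + (13 / 12) / 2) ^ 2 <= exp (13 / 12)) by (apply exp_ge_square; lra).
  assert (E3 : (2 * (256 / 225)) ^ xn <= exp (13 / 12) ^ xn) by (apply pow_incr; simpl in E2; lra).
  rewrite Rpow_mult_distr in E3.
  assert (E4 : 256 / 225 <= (256 / 225) ^ xn).
  { destruct xn as [|x]; [lia|]. simpl. pose proof (pow_R1_Rle (256 / 225) x ltac:(lra)). nra. }
  assert (E5 : exp (- (1 / 3 * c)) * exp (13 / 48 * c) = exp (- (c / 16)))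
    by (rewrite <- exp_plus; f_equal; field).
  pose proof (exp_pos (- (1 / 3 * c))). pose proof (pow_lt 2 xn ltac:(lra)).
  replace ((15 / 16) ^ 2) with (225 / 256) by field.
  assert (2 ^ xn * (256 / 225) <= exp (13 / 48 * c)) by nra.
  assert (2 ^ xn * exp (- (1 / 2 * c * harmonic_from n0 n0)) <= 2 ^ xn * exp (- (1 / 3 * c)))
    by (apply Rmult_le_compat_l; lra).
  unfold Rdiv at 1. rewrite Rinv_div. nra.
Qed.

Lemma half_k_lt_rate k eps : (1 <= k)%nat -> 0 < eps -> eps * sqrt (INR k) < 1 ->
  INR k / 2 < sqrt (INR k) / (2 * eps).
Proof.
  intros Hk He Hks. assert (0 < sqrt (INR k)) by (apply sqrt_lt_R0, lt_0_INR; lia).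
  apply Rmult_lt_reg_r with (2 * eps); [lra|].
  replace (sqrt (INR k) / (2 * eps) * (2 * eps)) with (sqrt (INR k)) by (field; lra).
  replace (INR k / 2 * (2 * eps)) with (eps * sqrt (INR k) * sqrt (INR k))
    by (rewrite Rmult_assoc, sqrt_sqrt by apply pos_INR; field).
  nra.
Qed.

Theorem mainTheorem2 :
  forall (k : nat) (eps : R),
    (1 <= k)%nat -> 0 < eps -> eps * sqrt (INR k) < 1 ->
  forall (n0 : nat), 4 * sqrt (INR k) / eps <= INR n0 ->
  forall s : state, in_support (prefix k eps n0) (s, true) ->
    1 - exp (- (sqrt (INR k) / (32 * eps)))
      <= Prob (window k eps n0 s)
              (fun l => INR k / 8 < INR (distinct_count l)).
Proof.
  intros k eps Hk He Hks n0 Hn0 s Hpre.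
  change (Prob _ _) with (Expect (window k eps n0 s) (success k)).
  pose proof (half_k_lt_rate k eps Hk He Hks) as Hc.
  replace (sqrt (INR k) / (32 * eps)) with (sqrt (INR k) / (2 * eps) / 16) by (field; lra).
  assert (Hn0c : 8 * (sqrt (INR k) / (2 * eps)) <= INR n0).
  { replace (8 * (sqrt (INR k) / (2 * eps))) with (4 * sqrt (INR k) / eps) by (field; lra).
    exact Hn0. }
  assert (Hk1 : 1 <= INR k) by (apply (le_INR 1); lia).
  assert (Hn0p : (1 <= n0)%nat) by (destruct n0; [simpl in Hn0c; lra|lia]).
  pose proof (window_inv_start k eps n0 s Hk He Hn0p Hpre) as HW.
  set (xn := Nat.div k 8).
  pose proof (Nat.div_mod k 8 ltac:(lia)). pose proof (Nat.mod_upper_bound k 8 ltac:(lia)).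
  assert (Hxk : (S xn <= k)%nat) by lia.
  assert (E8 : INR 8 = 8) by (simpl; lra).
  assert (Hxr : INR k < 8 * INR (S xn)) by (rewrite <- E8, <- mult_INR; apply lt_INR; lia).
  assert (Hxl : 8 * INR xn <= INR k) by (rewrite <- E8, <- mult_INR; apply le_INR; lia).
  destruct (Nat.eq_dec xn 0) as [Hx0|Hx0].
  - pose proof (window_success_ge k eps n0 xn 1 1 (7 / 8) Hk He Hn0c Hxk ltac:(lra)
                  ltac:(lra) ltac:(lra) ltac:(lia) ltac:(lra) s HW).
    rewrite Hx0 in H1. pose proof (fail_bound_few_sites k eps n0 Hn0p ltac:(lra)). lra.
  - pose proof (window_success_ge k eps n0 xn 2 (1 / 2) (15 / 16) Hk He Hn0c Hxk ltac:(lra)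
                  ltac:(lra) ltac:(lra) ltac:(lra) ltac:(lra) s HW).
    pose proof (fail_bound_many_sites k eps n0 xn Hn0p ltac:(lia) ltac:(lra)). lra.
Qed.
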